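(* Let $G$ be a group. Then $G$ is a $TR^{*}$-group if and only if there exists a normal subgroup $K$ of $G$ which is a torsion group such that $G/K$ is an $R^{*}$-group.
   Context: For $g,x$ in a group, $g^{x}:=xgx^{-1}$. A non-trivial element $g$ of a group $G$ is a generalized torsion element if there exist a positive integer $n$ and $x_1,\ldots,x_n\in G$ with $g^{x_1}g^{x_2}\cdots g^{x_n}=1$. A generalized torsion element is genuine if it is not a torsion element. A group is an $R^{*}$-group if it has no generalized torsion elements. A group is a $TR^{*}$-group if it has no genuine generalized torsion element, i.e. every generalized torsion element is a torsion element. A torsion group is a group all of whose elements have finite order. *)

(* abstract (possibly infinite) groups via mathcomp's
   [groupType] from boot/monoid.v.  Notation: x ^ y := y^-1 * x * y. *)
From HB Require Import structures.
From mathcomp Require Import all_boot.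
Set Implicit Arguments. Unset Strict Implicit. Unset Printing Implicit Defensive.
Local Open Scope group_scope.

Section Defs.
Variable G : groupType.

Definition torsion_elt (g : G) : Prop := exists n : nat, (0 < n)%N /\ g ^+ n = 1.

Definition gen_torsion (g : G) : Prop :=
  g <> 1 /\ exists xs : seq G, xs <> [::] /\ \prod_(x <- xs) (g ^ x) = 1.

Definition genuine_gen_torsion (g : G) : Prop := gen_torsion g /\ ~ torsion_elt g.

Definition Rstar_group : Prop := forall g : G, ~ gen_torsion g.

Definition TRstar_group : Prop := forall g : G, ~ genuine_gen_torsion g.

Definition normal_subgroup (K : G -> Prop) : Prop :=
  [/\ K 1,
      (forall x y, K x -> K y -> K (x * y)),
      (forall x, K x -> K x^-1) &
      (forall x y, K x -> K (x ^ y))].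

Definition torsion_subset (K : G -> Prop) : Prop := forall x, K x -> torsion_elt x.

End Defs.

Definition quotient_map (G Q : groupType) (K : G -> Prop) (f : G -> Q) : Prop :=
  [/\ (forall x y, f (x * y) = f x * f y),
      (forall q : Q, exists x, f x = q) &
      (forall x, f x = 1 <-> K x)].

(* If every generalized torsion element has finite order, the torsion elements
   form a normal subgroup T: when x ^+ m = y ^+ n = 1, the conjugates of x * y
   by x, x ^+ 2, ..., x ^+ n multiply to y ^+ n * x ^+ n = x ^+ n, so x * y is
   trivial or a generalized torsion element, hence torsion.  G / T is then an
   R*-group: if a nonempty product of conjugates of g is trivial modulo T, it
   is a torsion element of G, and a suitable power of it shows that g itself
   is a generalized torsion element of G, i.e. g lies in T.  Conversely, a
   homomorphism with torsion kernel K maps a non-torsion generalized torsion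
   element of G to a generalized torsion element of G / K. *)
From HB Require Import structures.
From mathcomp Require Import all_boot.
From mathcomp Require Import boolp.
Set Implicit Arguments. Unset Strict Implicit. Unset Printing Implicit Defensive.
Local Open Scope group_scope.

Lemma map_surj_seq (A B : Type) (f : A -> B) :
  (forall y, exists x, f x = y) -> forall t : seq B, exists s, map f s = t.
Proof.
move=> f_surj; elim=> [|y t [s <-]]; first by exists [::].
by have [x <-] := f_surj y; exists (x :: s).
Qed.

Section GeneralizedTorsion.
Variable G : groupType.
Implicit Types x y g : G.

Lemma torsion_elt1 : torsion_elt (1 : G).
Proof. by exists 1%N. Qed.

Lemma torsion_eltV x : torsion_elt x -> torsion_elt x^-1.
Proof. by case=> n [n_gt0 xn]; exists n; rewrite expVgn xn invg1. Qed.

Lemma torsion_eltJ x y : torsion_elt x -> torsion_elt (x ^ y).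
Proof. by case=> n [n_gt0 xn]; exists n; rewrite -conjXg xn conj1g. Qed.

Lemma torsion_eltX x k : torsion_elt x -> torsion_elt (x ^+ k).
Proof. by case=> n [n_gt0 xn]; exists n; rewrite expgnAC xn expg1n. Qed.

Lemma prod_conjg_expg g (s : seq G) m :
  (\prod_(x <- s) g ^ x) ^+ m = \prod_(x <- flatten (nseq m s)) g ^ x.
Proof.
elim: m => [|m IHm]; first by rewrite big_nil.
by rewrite expgS IHm big_cat.
Qed.

Lemma gen_torsion_torsion_prod g (s : seq G) :
  g <> 1 -> s <> [::] -> torsion_elt (\prod_(x <- s) g ^ x) -> gen_torsion g.
Proof.
move=> g_neq1 s_neq0 [n [n_gt0 prodn]]; split=> //.
exists (flatten (nseq n s)); rewrite -prod_conjg_expg prodn; split=> //.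
by case: n n_gt0 {prodn} => // n _; case: s s_neq0.
Qed.

(* The product telescopes: its i-th factor is x ^- i.-1 * y * x ^+ i. *)
Lemma prod_conjg_mulg_expg x y n :
  \prod_(1 <= i < n.+1) (x * y) ^ (x ^+ i) = y ^+ n * x ^+ n.
Proof.
elim: n => [|n IHn]; first by rewrite big_geq // mulg1.
rewrite big_nat_recr //= IHn conjgE expgS invgM expgSr.
by rewrite !mulgA mulgK mulgVK.
Qed.

Section TRstar.
Hypothesis TR : TRstar_group G.

Lemma TRstar_gen_torsion g : gen_torsion g -> torsion_elt g.
Proof. by move=> g_gt; apply: contrapT => g_nt; exact: TR (conj g_gt g_nt). Qed.

Lemma TRstar_torsion_eltM x y :
  torsion_elt x -> torsion_elt y -> torsion_elt (x * y).
Proof.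
move=> x_tor [n [n_gt0 yn]].
have [->|xy_neq1] := pselect (x * y = 1); first exact: torsion_elt1.
apply/TRstar_gen_torsion.
pose s := [seq x ^+ i | i <- index_iota 1 n.+1].
apply: (gen_torsion_torsion_prod (s := s) xy_neq1).
  by rewrite /s; case: (n) n_gt0.
by rewrite big_map prod_conjg_mulg_expg yn mul1g; exact: torsion_eltX.
Qed.

Lemma TRstar_normal_torsion : normal_subgroup (@torsion_elt G).
Proof.
split; [exact: torsion_elt1 | exact: TRstar_torsion_eltM
       | exact: torsion_eltV | exact: torsion_eltJ].
Qed.

End TRstar.
End GeneralizedTorsion.

Section Morphism.
Variables (G H : groupType) (f : G -> H).
Hypothesis fM : {morph f : x y / x * y}.

Lemma morph_mulg1 : f 1 = 1.
Proof. by apply: (@mulgI _ (f 1)); rewrite -fM !mulg1. Qed.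

Let fmorph : UMagmaMorphism.type G H :=
  HB.pack f (isUMagmaMorphism.Build G H f (morph_mulg1, fM)).

Lemma morph_prod_conjg g (s : seq G) :
  f (\prod_(x <- s) g ^ x) = \prod_(x <- map f s) f g ^ x.
Proof.
rewrite big_map (big_morph f fM morph_mulg1).
by apply: eq_bigr => x _; exact: (gmulfJ fmorph).
Qed.

Lemma gen_torsion_morph g : f g <> 1 -> gen_torsion g -> gen_torsion (f g).
Proof.
move=> fg_neq1 [_ [s [s_neq0 prod1]]]; split=> //.
exists (map f s); rewrite -morph_prod_conjg prod1 morph_mulg1.
by case: s s_neq0 {prod1}.
Qed.

End Morphism.

Lemma quotient_Rstar (G Q : groupType) (K : G -> Prop) (f : G -> Q) :
  quotient_map K f -> torsion_subset K ->
  (forall g, gen_torsion g -> K g) -> Rstar_group Q.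
Proof.
case=> fM f_surj kerf K_tor K_gt q [q_neq1 [t [t_neq0 prod1]]].
have [g def_q] := f_surj q; have [s def_t] := map_surj_seq f_surj t.
subst q t; have g_neq1 : g <> 1.
  by move=> g1; apply: q_neq1; rewrite g1 morph_mulg1.
apply: q_neq1; apply/kerf/K_gt.
apply: (gen_torsion_torsion_prod (s := s) g_neq1).
  by case: s t_neq0 {prod1}.
by apply/K_tor/kerf; rewrite morph_prod_conjg.
Qed.

Section QuotientGroup.
Variables (G : groupType) (K : G -> Prop).
Hypothesis nK : normal_subgroup K.
Implicit Types x y a b : G.

Lemma normal_subgroup1 : K 1. Proof. by case: nK. Qed.
Lemma normal_subgroupM x y : K x -> K y -> K (x * y).
Proof. by case: nK => _ KM _ _; exact: KM. Qed.
Lemma normal_subgroupV x : K x -> K x^-1.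
Proof. by case: nK => _ _ KV _; exact: KV. Qed.
Lemma normal_subgroupJ x y : K x -> K (x ^ y).
Proof. by case: nK => _ _ _ KJ; exact: KJ. Qed.

Lemma lcoset_congM a a' b b' :
  K (a^-1 * a') -> K (b^-1 * b') -> K ((a * b)^-1 * (a' * b')).
Proof.
move=> Ka Kb; have := normal_subgroupM (normal_subgroupJ b Ka) Kb.
by rewrite conjgE invgM !mulgA mulgK.
Qed.

Lemma lcoset_congV a a' : K (a^-1 * a') -> K (a^-1^-1 * a'^-1).
Proof.
move=> Ka; have := normal_subgroupJ a'^-1 (normal_subgroupV Ka).
by rewrite conjgE invgM invgK !mulgA mulgV mul1g.
Qed.

Definition lcoset x : G -> Prop := fun y => K (x^-1 * y).

(* The carrier takes [normal_subgroup K] as an argument only so that the group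
   structure below, whose axioms need it, can be declared on it. *)
Definition quot_type (_ : normal_subgroup K) :=
  {P : G -> Prop | exists x, P = lcoset x}.
Local Notation qT := (quot_type nK).
HB.instance Definition _ := gen_eqMixin qT.
HB.instance Definition _ := gen_choiceMixin qT.

Definition quot_proj x : qT := exist _ (lcoset x) (ex_intro _ x erefl).
Definition quot_repr (q : qT) : G := projT1 (cid (proj2_sig q)).

Lemma quot_reprK : cancel quot_repr quot_proj.
Proof.
case=> P P_coset; rewrite /quot_repr /=; case: cid => x def_P /=.
by apply: eq_exist; rewrite def_P.
Qed.

Lemma eq_quot_proj x y : quot_proj x = quot_proj y <-> K (x^-1 * y).
Proof.
split=> [/(f_equal sval) /= eq_xy | Kxy].
  have : lcoset y y by rewrite /lcoset mulVg; exact: normal_subgroup1.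
  by rewrite -eq_xy.
apply: eq_exist; apply: funext => z; apply: propext; split=> Kz.
  have := normal_subgroupM (normal_subgroupV Kxy) Kz.
  by rewrite invgM invgK mulgA mulgK.
by have := normal_subgroupM Kxy Kz; rewrite -mulgA mulVKg.
Qed.

Lemma quot_repr_proj x : K ((quot_repr (quot_proj x))^-1 * x).
Proof. by apply/eq_quot_proj; rewrite quot_reprK. Qed.

Definition quot_mul (q r : qT) : qT := quot_proj (quot_repr q * quot_repr r).
Definition quot_one : qT := quot_proj 1.
Definition quot_inv (q : qT) : qT := quot_proj (quot_repr q)^-1.

Lemma quot_mul_proj x y :
  quot_mul (quot_proj x) (quot_proj y) = quot_proj (x * y).
Proof. by apply/eq_quot_proj/lcoset_congM; exact: quot_repr_proj. Qed.

Lemma quot_inv_proj x : quot_inv (quot_proj x) = quot_proj x^-1.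
Proof. by apply/eq_quot_proj/lcoset_congV; exact: quot_repr_proj. Qed.

Lemma quot_mulA : associative quot_mul.
Proof.
move=> q r p; rewrite -[q]quot_reprK -[r]quot_reprK -[p]quot_reprK.
by rewrite !quot_mul_proj mulgA.
Qed.

Lemma quot_mul1 : left_id quot_one quot_mul.
Proof. by move=> q; rewrite -[q]quot_reprK quot_mul_proj mul1g. Qed.

Lemma quot_mulr1 : right_id quot_one quot_mul.
Proof. by move=> q; rewrite -[q]quot_reprK quot_mul_proj mulg1. Qed.

Lemma quot_mulV : left_inverse quot_one quot_inv quot_mul.
Proof.
by move=> q; rewrite -[q]quot_reprK quot_inv_proj quot_mul_proj mulVg.
Qed.

Lemma quot_mulVr : right_inverse quot_one quot_inv quot_mul.
Proof.
by move=> q; rewrite -[q]quot_reprK quot_inv_proj quot_mul_proj mulgV.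
Qed.

HB.instance Definition _ :=
  isGroup.Build qT quot_mulA quot_mul1 quot_mulr1 quot_mulV quot_mulVr.

Lemma quotient_map_quot_proj : quotient_map K quot_proj.
Proof.
split=> [x y | q | x]; first by rewrite -quot_mul_proj.
  by exists (quot_repr q); rewrite quot_reprK.
rewrite (eq_quot_proj x 1) mulg1.
by split=> /normal_subgroupV; rewrite ?invgK.
Qed.

Lemma exists_quotient_map :
  exists (Q : groupType) (f : G -> Q), quotient_map K f.
Proof. by exists qT, quot_proj; exact: quotient_map_quot_proj. Qed.

End QuotientGroup.

Theorem theorem1p1 (G : groupType) :
  TRstar_group G <->
  exists K : G -> Prop,
    [/\ normal_subgroup K, torsion_subset K &
        exists (Q : groupType) (f : G -> Q), quotient_map K f /\ Rstar_group Q].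
Proof.
split=> [TR | [K [_ K_tor [Q [f [fK RQ]]]]] g [g_gt g_nt]].
  have nT := TRstar_normal_torsion TR.
  have [Q [f fT]] := exists_quotient_map nT.
  exists (@torsion_elt G); split=> //; exists Q, f; split=> //.
  exact: quotient_Rstar fT _ (TRstar_gen_torsion TR).
case: (fK) => fM _ kerf; apply: (RQ (f g)).
by apply: gen_torsion_morph => // /kerf /K_tor.
Qed.
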